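(* Let $X$ be a metric space and $\tau\in\mathrm{Fin}\,\mathbb N\cup\{\emptyset\}$ such that $\operatorname{Ord}A(X)^\tau=\alpha$ for some ordinal number $\alpha$. Then for each ordinal $\xi\le\alpha$ there exists $\sigma\in\mathrm{Fin}\,\mathbb N\cup\{\emptyset\}$ such that $\operatorname{Ord}A(X)^{\tau\cup\sigma}=\xi$.
   Context: A family $\mathcal A$ of subsets of a metric space is uniformly bounded if there is $C>0$ with $\operatorname{diam}A\le C$ for all $A\in\mathcal A$; it is $r$-disjoint if $d(A_1,A_2)\ge r$ for all distinct $A_1,A_2\in\mathcal A$. For a set $L$, $\mathrm{Fin}\,L$ is the collection of finite nonempty subsets of $L$. For $M\subset \mathrm{Fin}\,L$ and $\sigma\in\{\emptyset\}\cup\mathrm{Fin}\,L$, $M^\sigma=\{\tau\in\mathrm{Fin}\,L:\sigma\cup\tau\in M,\ \sigma\cap\tau=\emptyset\}$, and $M^a=M^{\{a\}}$. The ordinal $\operatorname{Ord}M$: $\operatorname{Ord}M=0$ iff $M=\emptyset$; $\operatorname{Ord}M\le\alpha$ iff $\operatorname{Ord}M^a<\alpha$ for every $a\in L$; $\operatorname{Ord}M=\alpha$ iff $\operatorname{Ord}M\le\alpha$ and not $\operatorname{Ord}M<\alpha$; $\operatorname{Ord}M=\infty$ iff $\operatorname{Ord} M\le\alpha$ for no ordinal $\alpha$. For a metric space $X$, $A(X)$ is the set of $\sigma\in\mathrm{Fin}\,\mathbb N$ such that there do NOT exist uniformly bounded families $\mathcal V_i$, $i\in\sigma$, with $\bigcup_{i\in\sigma}\mathcal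 V_i$ covering $X$ and each $\mathcal V_i$ being $i$-disjoint; here $L=\mathbb N$. *)

From Stdlib Require Import Reals.
From mathcomp Require Import all_boot all_order.
From mathcomp Require Import finmap.

Set Implicit Arguments.
Unset Strict Implicit.
Unset Printing Implicit Defensive.

Local Open Scope fset_scope.

Definition is_metric (T : Type) (d : T -> T -> R) : Prop :=
  (forall x y, Rle R0 (d x y)) /\
  (forall x y, d x y = R0 <-> x = y) /\
  (forall x y, d x y = d y x) /\
  (forall x y z, Rle (d x z) (Rplus (d x y) (d y z))).

Definition family (T : Type) := (T -> Prop) -> Prop.

(* uniformly bounded: exists C > 0 with diam A <= C for all A in the family;
   diam A <= C unfolds to: d x y <= C for all x, y in A. *)
Definition unif_bounded (T : Type) (d : T -> T -> R) (V : family T) : Prop :=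
  exists C : R, Rlt R0 C /\
    forall A, V A -> forall x y, A x -> A y -> Rle (d x y) C.

(* r-disjoint: d(A1,A2) >= r for distinct members; d(A1,A2) = inf d(x,y),
   so this unfolds to d x y >= r for all x in A1, y in A2. *)
Definition r_disjoint (T : Type) (d : T -> T -> R) (r : R) (V : family T) : Prop :=
  forall A1 A2, V A1 -> V A2 -> A1 <> A2 ->
    forall x y, A1 x -> A2 y -> Rle r (d x y).

Definition posnat := {n : nat | (0 < n)%N}.

(* A subset M of Fin L is a predicate on {fset L} whose members are nonempty;
   sigma in {emptyset} u Fin L is any {fset L}. *)
Definition upper (L : choiceType) (M : {fset L} -> Prop) (sigma : {fset L})
  : {fset L} -> Prop :=
  fun tau => tau != fset0 /\ M (sigma `|` tau) /\ [disjoint sigma & tau].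

(* Ord M <= alpha  (least fixed point; alpha ranges over a well-ordered type):
   Ord M = 0 iff M = empty, and for nonempty M, Ord M <= alpha iff
   for every a in L, Ord M^a < alpha, i.e. Ord M^a <= beta for some beta < alpha. *)
Inductive ord_le (L : choiceType) (disp : Order.disp_t) (O : orderType disp)
  : ({fset L} -> Prop) -> O -> Prop :=
| ord_le_empty M alpha : (forall s, ~ M s) -> ord_le M alpha
| ord_le_step M alpha :
    (forall a : L, exists beta : O, (beta < alpha)%O /\ ord_le (upper M [fset a]) beta) ->
    ord_le M alpha.

Definition ord_eq (L : choiceType) (disp : Order.disp_t) (O : orderType disp)
  (M : {fset L} -> Prop) (alpha : O) : Prop :=
  ord_le M alpha /\ forall beta : O, (beta < alpha)%O -> ~ ord_le M beta.

Definition AX (T : Type) (d : T -> T -> R) : {fset posnat} -> Prop :=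
  fun sigma => sigma != fset0 /\
    ~ exists V : posnat -> family T,
        (forall i, i \in sigma ->
           unif_bounded d (V i) /\ r_disjoint d (INR (val i)) (V i)) /\
        (forall x : T, exists i, i \in sigma /\ exists A, V i A /\ A x).

(* Ordinals are represented by an arbitrary well-ordered type O. *)
Definition well_ordered (disp : Order.disp_t) (O : orderType disp) : Prop :=
  well_founded (fun x y : O => (x < y)%O).

(* Induction on alpha.  If xi < alpha, then Ord N^a < alpha for every a, where
   N = A(X)^tau, but Ord N^a < xi cannot hold for every a (else Ord N <= xi);
   so some a outside tau has xi <= Ord N^a < alpha, and N^a = A(X)^(tau u {a}).
   The induction hypothesis applied to tau u {a} then yields sigma.  Nothing
   about A(X) is used. *)
From Stdlib Require Import Reals.
From mathcomp Require Import all_boot all_order.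
From mathcomp Require Import finmap.
From Stdlib Require Import Classical FunctionalExtensionality PropExtensionality.
Import Order.TTheory.
Local Open Scope fset_scope.

Lemma well_ordered_least {disp : Order.disp_t} {O : orderType disp}
    (hO : well_ordered O) {P : O -> Prop} {x : O} :
  P x -> exists m, [/\ P m, (m <= x)%O & forall y, (y < m)%O -> ~ P y].
Proof.
elim/(well_founded_ind hO): x => x IH Px.
case: (classic (exists2 y, (y < x)%O & P y)) => [[y yx Py]|noPy].
- have [m [Pm my mmin]] := IH y yx Py.
  by exists m; split=> //; apply: le_trans my (ltW yx).
- by exists x; split=> // y yx Py; apply: noPy; exists y.
Qed.

Section UpperSets.

Variables (L : choiceType) (M : {fset L} -> Prop).

Lemma upper_upper1 (t : {fset L}) (a : L) :
  a \notin t -> upper (upper M t) [fset a] = upper M (t `|` [fset a]).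
Proof.
move=> at_; apply: functional_extensionality => r.
apply: propositional_extensionality; rewrite /upper fsetUA.
rewrite fdisjointUX fdisjointXU fdisjoint1X fdisjointX1 at_ /=.
split.
- by case=> r0 [[_ [Mr tr]] ar]; rewrite ar tr.
- case=> r0 [Mr /andP[tr ar]]; do 3!split=> //.
  by apply/fset0Pn; exists a; rewrite in_fsetU in_fset1 eqxx.
Qed.

Lemma upper_upper1_in (t : {fset L}) (a : L) s :
  a \in t -> ~ upper (upper M t) [fset a] s.
Proof.
move=> at_ [_ [[_ [_ tr]] _]].
by move/fdisjointP: tr => /(_ a at_); rewrite in_fsetU in_fset1 eqxx.
Qed.

Lemma upper_notin {t s : {fset L}} :
  upper M t s -> exists a, a \notin t.
Proof.
case=> /fset0Pn [a as_] [_ ts]; exists a.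
by apply/negP => at_; move/fdisjointP: ts => /(_ a at_); rewrite as_.
Qed.

Variables (disp : Order.disp_t) (O : orderType disp).

Lemma ord_le_nonempty {N : {fset L} -> Prop} {alpha : O} :
  ord_le N alpha -> (exists s, N s) ->
  forall a, exists beta, (beta < alpha)%O /\ ord_le (upper N [fset a]) beta.
Proof. by case=> [N' al N'0 [s N's]|//]; case: (N'0 s). Qed.

(* Only the [a] outside [t] matter: for [a] in [t] the upper set is empty. *)
Lemma ord_le_upper (t : {fset L}) (xi : O) :
  (forall a, a \notin t ->
     exists beta, (beta < xi)%O /\ ord_le (upper M (t `|` [fset a])) beta) ->
  ord_le (upper M t) xi.
Proof.
move=> below.
case: (classic (exists s, upper M t s)) => [[s Ms]|empty]; last first.
  by apply: ord_le_empty => s Ms; apply: empty; exists s.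
have [a0 a0t] := upper_notin Ms.
have [beta0 [beta0xi _]] := below a0 a0t.
apply: ord_le_step => a; case: (boolP (a \in t)) => at_.
- by exists beta0; split=> //; apply: ord_le_empty => r; apply: upper_upper1_in.
- by rewrite upper_upper1 //; apply: below.
Qed.

Hypothesis hO : well_ordered O.

Lemma ord_eq_upper1 {t : {fset L}} {alpha xi : O} :
  ord_eq (upper M t) alpha -> (xi < alpha)%O ->
  exists a g, [/\ (xi <= g)%O, (g < alpha)%O &
                  ord_eq (upper M (t `|` [fset a])) g].
Proof.
move=> [le_alpha min_alpha] xialpha.
have not_le_xi := min_alpha xi xialpha.
have [a [at_ not_below]] : exists a, a \notin t /\
    forall beta, (beta < xi)%O -> ~ ord_le (upper M (t `|` [fset a])) beta.
  apply: NNPP => none; apply/not_le_xi/ord_le_upper => a at_.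
  apply: NNPP => nobeta; apply: none; exists a; split=> // beta betaxi le_beta.
  by apply: nobeta; exists beta.
have nonempty : exists s, upper M t s.
  by apply: NNPP => empty; apply/not_le_xi/ord_le_empty => s Ms; apply: empty; exists s.
have [beta [betaalpha]] := ord_le_nonempty le_alpha nonempty a.
rewrite upper_upper1 // => le_beta.
have [g [le_g gbeta gmin]] := well_ordered_least hO le_beta.
exists a, g; split; last by split.
- by rewrite leNgt; apply/negP => gxi; apply: not_below gxi le_g.
- by apply: le_lt_trans gbeta betaalpha.
Qed.

Lemma ord_eq_upper_intermediate (t : {fset L}) (alpha : O) :
  ord_eq (upper M t) alpha ->
  forall xi : O, (xi <= alpha)%O ->
    exists sigma, ord_eq (upper M (t `|` sigma)) xi.
Proof.
elim/(well_founded_ind hO): alpha t => alpha IH t ord_alpha xi.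
rewrite le_eqVlt => /orP[/eqP ->|xialpha]; first by exists fset0; rewrite fsetU0.
have [a [g [xig galpha ord_g]]] := ord_eq_upper1 ord_alpha xialpha.
have [sigma ord_xi] := IH g galpha _ ord_g xi xig.
by exists ([fset a] `|` sigma); rewrite fsetUA.
Qed.

End UpperSets.

Theorem lemma5 (T : Type) (d : T -> T -> R) (hd : is_metric d)
  (disp : Order.disp_t) (O : orderType disp) (hO : well_ordered O)
  (tau : {fset posnat}) (alpha : O) :
  ord_eq (upper (AX d) tau) alpha ->
  forall xi : O, (xi <= alpha)%O ->
    exists sigma : {fset posnat}, ord_eq (upper (AX d) (tau `|` sigma)) xi.
Proof. exact: ord_eq_upper_intermediate. Qed.
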